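(* Let $n\geq 1$ and $k\geq 0$ be integers, let $0\leq i\leq n-1$ and $0\leq j\leq k$, and define \[ i'=\Big\lfloor \frac{(n+1)k-(k+1)i-j}{k+1}\Big\rfloor,\qquad j'=(n+1)k-(k+1)i-j-(k+1)i'. \] If $\pi\in\Gamma^k(n,i;j)$, then $\varphi(\pi)\in\Gamma^k(n,i';j')$.
   Context: For a permutation $\pi=\pi_1\cdots\pi_n$ of $[n]=\{1,\dots,n\}$, $\mathrm{des}(\pi)$ is the number of $m\in[n-1]$ with $\pi_m>\pi_{m+1}$, and $\mathrm{maxdrop}(\pi)=\max\{m-\pi_m:1\leq m\leq n\}$. $A_{n,k}$ is the set of permutations of $[n]$ with $\mathrm{maxdrop}(\pi)\leq k$. For $0\le i\le n-1$ and $0\le j\le k$, $\Gamma^k(n,i;j)$ is the set of $\pi\in A_{n,k}$ with $\mathrm{des}(\pi)=i$ and $\pi_n=n-k+j$. For a permutation $\sigma$ of $[n-1]$ and $1\leq r\leq n$, $\sigma\leftarrow r$ is the permutation of $[n]$ obtained by increasing every entry of $\sigma$ that is $\geq r$ by $1$ and then appending $r$ at the end. The map $\varphi:A_{n,k}\to A_{n,k}$ is defined recursively: $\varphi(1)=1$; for $n\geq 2$ and $\pi\in A_{n,k}$, let $i=\mathrm{des}(\pi)$, $j=\pi_n-n+k$, $i'=\lfloor((n+1)k-(k+1)i-j)/(k+1)\rfloor$, $j'=(n+1)k-(k+1)i-j-(k+1)i'$, let $\pi'$ be the permutation of $[n-1]$ order-isomorphic to $\pi_1\cdots\pi_{n-1}$,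 and set $\varphi(\pi)=\varphi(\pi')\leftarrow(n-k+j')$. *)

From mathcomp Require Import all_boot all_order all_algebra.
Set Implicit Arguments. Unset Strict Implicit. Unset Printing Implicit Defensive.
Import Order.TTheory GRing.Theory Num.Theory.

(* A permutation pi = pi_1 ... pi_n of [n] is represented by the sequence
   [:: pi_1; ...; pi_n] of naturals; pi_m = nth 0 s (m-1). *)
Definition is_perm (n : nat) (s : seq nat) : bool := perm_eq s (iota 1 n).

Definition des (s : seq nat) : nat :=
  \sum_(0 <= m < (size s).-1) (nth 0 s m.+1 < nth 0 s m : nat).

(* maxdrop = max_{1<=m<=n} (m - pi_m).  Since sum_m (m - pi_m) = 0 for a
   permutation, this maximum is >= 0, so truncated nat subtraction gives the
   same value on permutations (n >= 1). *)
Definition maxdrop (s : seq nat) : nat :=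
  \max_(m < size s) (m.+1 - nth 0 s m).

Definition A_nk (n k : nat) (s : seq nat) : bool :=
  is_perm n s && (maxdrop s <= k).

Definition Gamma (k n : nat) (i j : int) (s : seq nat) : bool :=
  [&& A_nk n k s, ((Posz (des s)) == i) & ((Posz (last 0 s)) == (Posz n) - (Posz k) + j)%R].

Definition ins (s : seq nat) (r : nat) : seq nat :=
  rcons [seq (if r <= x then x.+1 else x) | x <- s] r.

(* the permutation order-isomorphic to a sequence t of distinct naturals *)
Definition std (t : seq nat) : seq nat :=
  [seq count (fun y => y <= x) t | x <- t].

(* i' and j' as integers; floor division by k+1 > 0 is intdiv's %/ *)
Definition bigN (n k : nat) (i j : int) : int :=
  ((Posz (n.+1)) * (Posz k) - (Posz (k.+1)) * i - j)%R.
Definition iprime (n k : nat) (i j : int) : int := (bigN n k i j %/ (Posz (k.+1)))%Z.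
Definition jprime (n k : nat) (i j : int) : int :=
  (bigN n k i j - (Posz (k.+1)) * iprime n k i j)%R.

Definition int_to_nat (z : int) : nat :=
  match z with Posz m => m | Negz _ => 0 end.

Fixpoint phi_n (k n : nat) (s : seq nat) : seq nat :=
  match n with
  | 0 => [::]
  | n'.+1 =>
      if n' == 0 then [:: 1] else
      let i := (Posz (des s)) in
      let j := ((Posz (last 0 s)) - (Posz n) + (Posz k))%R in
      let j' := jprime n k i j in
      ins (phi_n k n' (std (take n' s))) (int_to_nat ((Posz n) - (Posz k) + j')%R)
  end.

Definition phi (k : nat) (s : seq nat) : seq nat := phi_n k (size s) s.

From mathcomp Require Import all_boot all_order all_algebra.
From mathcomp Require Import zify ring.
Set Implicit Arguments. Unset Strict Implicit. Unset Printing Implicit Defensive.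
Import Order.TTheory GRing.Theory Num.Theory.

(* Each pi in A_{n,k} is [ins sigma p], where p = pi_n and sigma is the
   standardisation of pi_1 ... pi_(n-1), and phi(pi) = [ins phi(sigma) r]
   with r = n - k + j'.  Inserting r as a new last letter adds a descent iff r
   is at most the previous last letter, i.e. iff j'(pi) < j'(sigma); so by
   induction des phi(pi) = i'(sigma) + [j'(pi) < j'(sigma)].  The numerators
   (n+1)k - (k+1)i - j of pi and sigma differ by a number in [0, k], hence
   their quotients by k+1 (the i') differ exactly by the carry of the
   remainders (the j').  Finally j' + p is a positive multiple of k+1, which
   keeps r in [1, n]. *)

Lemma is_permE n s :
  is_perm n s = [&& uniq s, size s == n & all (fun x => 0 < x <= n) s].
Proof.
apply/idP/idP => [perm_s | /and3P[uniq_s /eqP size_s /allP range_s]].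
  rewrite (perm_uniq perm_s) iota_uniq (perm_size perm_s) size_iota eqxx /=.
  by apply/allP => x; rewrite (perm_mem perm_s) mem_iota; lia.
have sub_s : {subset s <= iota 1 n}.
  by move=> x /range_s; rewrite mem_iota; lia.
have size_le : size (iota 1 n) <= size s by rewrite size_iota size_s.
have [_ eq_s] := uniq_min_size uniq_s sub_s size_le.
exact: uniq_perm uniq_s (iota_uniq 1 n) eq_s.
Qed.

Lemma maxdropP s k :
  reflect (forall m, m < size s -> m.+1 - nth 0 s m <= k) (maxdrop s <= k).
Proof.
apply: (iffP (bigmax_leqP _ _ _)) => [drop_s m lt_m | drop_s [m lt_m] _].
  exact: (drop_s (Ordinal lt_m)).
exact: drop_s.
Qed.

Lemma A_nkP n k s :
  reflect [/\ uniq s, size s = n, {in s, forall x, 0 < x <= n}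
            & forall m, m < n -> m.+1 - nth 0 s m <= k]
          (A_nk n k s).
Proof.
rewrite /A_nk is_permE; apply: (iffP andP).
  case=> /and3P[uniq_s /eqP size_s /allP range_s] /maxdropP drop_s.
  by split=> // m; rewrite -size_s; apply: drop_s.
case=> uniq_s size_s range_s drop_s; split.
  by rewrite uniq_s size_s eqxx; apply/allP.
by apply/maxdropP; rewrite size_s.
Qed.

Lemma A_nk_last n k s :
  A_nk n.+1 k s -> 0 < last 0 s <= n.+1 /\ n.+1 - last 0 s <= k.
Proof.
case/A_nkP=> _ size_s range_s drop_s.
have size_gt0 : 0 < size s by rewrite size_s.
rewrite -nth_last size_s /=; split; last exact: drop_s.
by apply: range_s; rewrite mem_nth // size_s.
Qed.

Lemma insE s r : ins s r = rcons (map (bump r) s) r.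
Proof. by congr rcons; apply: eq_map => x; rewrite /bump; case: leqP. Qed.

Lemma last_ins s r : last 0 (ins s r) = r.
Proof. exact: last_rcons. Qed.

Lemma rcons_ins t p : p \notin t -> rcons t p = ins (map (unbump p) t) p.
Proof.
move=> p_notin_t; rewrite insE -map_comp map_id_in // => x x_in_t /=.
by apply: unbumpK; apply: contraNneq p_notin_t => <-.
Qed.

Lemma count_leq_iota n x : x <= n -> count (fun y => y <= x) (iota 1 n) = x.
Proof.
move=> le_xn; rewrite -(subnKC le_xn) iotaD count_cat.
rewrite (@eq_in_count _ _ predT) => [|y]; last by rewrite mem_iota /=; lia.
rewrite (@eq_in_count _ _ pred0 (iota (1 + x) _)) => [|y]; last first.
  by rewrite mem_iota /= => ?; apply/negbTE; lia.
by rewrite count_predT count_pred0 size_iota addn0.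
Qed.

Lemma std_perm n s : is_perm n s -> std s = s.
Proof.
move=> perm_s; apply: map_id_in => x x_in_s.
rewrite (permP perm_s) count_leq_iota //.
by move: x_in_s; rewrite (perm_mem perm_s) mem_iota; lia.
Qed.

Lemma std_map_mono f t :
  {in t &, {mono f : a b / a <= b}} -> std (map f t) = std t.
Proof.
move=> f_mono; rewrite /std -map_comp; apply/eq_in_map => x x_in_t /=.
by rewrite count_map; apply: eq_in_count => y y_in_t /=; apply: f_mono.
Qed.

Lemma std_ins_take n s r : is_perm n s -> std (take (size s) (ins s r)) = s.
Proof.
move=> perm_s; rewrite insE -cats1 take_size_cat ?size_map //.
by rewrite std_map_mono ?(std_perm perm_s) // => a b _ _; apply: leq_bump2.
Qed.

Lemma des_rcons t p : 0 < size t -> des (rcons t p) = des t + (p < last 0 t).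
Proof.
rewrite /des size_rcons -nth_last; case def_n: (size t) => [//|n] _ /=.
rewrite big_nat_recr //= !nth_rcons def_n ltnn eqxx ltnSn; congr (_ + _).
apply: eq_big_nat => m /andP[_ lt_m].
by rewrite !nth_rcons def_n !ltnS lt_m (ltnW lt_m).
Qed.

Lemma des_map_mono f t : {in t &, {mono f : a b / a < b}} -> des (map f t) = des t.
Proof.
move=> f_mono; rewrite /des size_map; apply: eq_big_nat => m /andP[_ lt_m].
have lt_m1 : m.+1 < size t by move: lt_m; case: (size t) => //= *; lia.
by rewrite !(nth_map 0) ?f_mono ?mem_nth //; apply: ltnW.
Qed.

Lemma des_ins s r : 0 < size s -> des (ins s r) = des s + (r <= last 0 s).
Proof.
move=> size_gt0; rewrite insE des_rcons ?size_map //.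
rewrite des_map_mono => [|a b _ _]; last by rewrite !ltnNge leq_bump2.
have -> : last 0 (map (bump r) s) = bump r (last 0 s).
  by case/lastP: s size_gt0 => // s l _; rewrite map_rcons !last_rcons.
rewrite /bump; case: (leqP r (last 0 s)) => [le_rl | /ltnW le_lr] /=.
  by rewrite add1n ltnS le_rl.
by rewrite add0n (leq_gtF le_lr).
Qed.

Lemma nth_ins s r m :
  nth 0 (ins s r) m = if m < size s then bump r (nth 0 s m) else if m == size s then r else 0.
Proof. by rewrite insE nth_rcons size_map; case: ltnP => // lt_m; rewrite (nth_map 0). Qed.

Lemma A_nk_ins n k s p : size s = n ->
  A_nk n.+1 k (ins s p) = [&& A_nk n k s, 0 < p <= n.+1 & n.+1 - p <= k].
Proof.
move=> size_s; have p_in_ins : p \in ins s p by rewrite insE mem_rcons mem_head.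
have bump_in_ins x : x \in s -> bump p x \in ins s p.
  by move=> x_in_s; rewrite insE mem_rcons inE map_f ?orbT.
have uniq_ins : uniq (ins s p) = uniq s.
  rewrite insE rcons_uniq (map_inj_uniq (can_inj (bumpK p))).
  suff /negPf-> : p \notin map (bump p) s by [].
  by apply/mapP=> -[x _]; apply/eqP; apply: neq_bump.
apply/A_nkP/and3P => [[uniq_i _ range_i drop_i] |
                      [/A_nkP[uniq_s _ range_s drop_s] range_p drop_p]].
- have range_p := range_i p p_in_ins.
  have drop_p : n.+1 - p <= k.
    by have := drop_i n (ltnSn n); rewrite nth_ins size_s ltnn eqxx.
  split=> //; apply/A_nkP; split=> //; first by rewrite -uniq_ins.
    move=> x /bump_in_ins/range_i; rewrite /bump; case: leqP; lia.
  move=> m lt_mn; have := drop_i m (ltnW lt_mn).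
  rewrite nth_ins size_s lt_mn /bump; case: leqP; lia.
- split; first by rewrite uniq_ins.
  + by rewrite insE size_rcons size_map size_s.
  + move=> y; rewrite insE mem_rcons inE => /orP[/eqP-> // | /mapP[x /range_s + ->]].
    rewrite /bump; case: leqP; lia.
  + move=> m; rewrite ltnS leq_eqVlt => /orP[/eqP-> | lt_mn].
      by rewrite nth_ins size_s ltnn eqxx.
    have := drop_s m lt_mn; rewrite nth_ins size_s lt_mn /bump; case: leqP; lia.
Qed.

Local Open Scope ring_scope.

Lemma divz_carry (d : nat) (x y : int) : 0 <= x - y < d ->
  (x %/ d)%Z = (y %/ d)%Z + ((x %% d)%Z < (y %% d)%Z).
Proof.
move=> /andP[ge0_xy lt_xy_d].
have d_gt0 : 0 < d%:Z by lia.
have d_neq0 : d%:Z != 0 by rewrite gt_eqF.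
have [x_mod_ge0 y_mod_ge0] := (modz_ge0 x d_neq0, modz_ge0 y d_neq0).
have [x_mod_lt y_mod_lt] := (ltz_pmod x d_gt0, ltz_pmod y d_gt0).
move: (divz_eq x d) (divz_eq y d) ge0_xy lt_xy_d x_mod_ge0 y_mod_ge0 x_mod_lt y_mod_lt.
set qx := (x %/ d)%Z; set qy := (y %/ d)%Z; set rx := (x %% d)%Z; set ry := (y %% d)%Z.
move=> -> ->; case: ltrP => [lt_r|le_r] /=; nia.
Qed.

Lemma jprimeE n k i j : jprime n k i j = (bigN n k i j %% k.+1)%Z.
Proof.
rewrite /jprime /iprime {1}(divz_eq (bigN n k i j) k.+1).
by rewrite mulrC addrAC subrr add0r.
Qed.

Lemma jprime_ge0 n k i j : 0 <= jprime n k i j.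
Proof. by rewrite jprimeE modz_ge0. Qed.

Lemma jprime_le n k i j : jprime n k i j <= k.
Proof. by have := @ltz_pmod (bigN n k i j) k.+1 isT; rewrite -jprimeE; lia. Qed.

Lemma bigN_lastE n k i (p : int) : bigN n k i (p - n%:Z + k%:Z) = k.+1%:Z * (n%:Z - i) - p.
Proof. by rewrite /bigN !intS; ring. Qed.

Lemma jprime_last_gt0 n k i (p : nat) : (0 < p <= n)%N ->
  0 < n%:Z - k%:Z + jprime n k i (p%:Z - n%:Z + k%:Z).
Proof.
move=> p_range; rewrite jprimeE bigN_lastE.
have := divz_eq (k.+1%:Z * (n%:Z - i) - p%:Z) k.+1.
have := modz_ge0 (k.+1%:Z * (n%:Z - i) - p%:Z) (isT : k.+1%:Z != 0).
set q := (_ %/ _)%Z; set r := (_ %% _)%Z => r_ge0 def_N.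
have r_p : r + p%:Z = k.+1%:Z * (n%:Z - i - q) by move: def_N; lia.
have : 0 < n%:Z - i - q by nia.
nia.
Qed.

Lemma iprime_ins n k (d : int) (p q : nat) :
  (p <= n.+1)%N -> (n.+1 - p <= k)%N -> (q <= n)%N -> (n - q <= k)%N ->
  iprime n.+1 k (d + (p <= q)%N%:Z) (p%:Z - n.+1%:Z + k%:Z)
  = iprime n k d (q%:Z - n%:Z + k%:Z)
    + (jprime n.+1 k (d + (p <= q)%N%:Z) (p%:Z - n.+1%:Z + k%:Z)
       < jprime n k d (q%:Z - n%:Z + k%:Z)).
Proof.
move=> le_p drop_p le_q drop_q; rewrite /iprime !jprimeE; apply: divz_carry.
rewrite !bigN_lastE; case: leqP => /= [le_pq | lt_qp]; apply/andP; split; nia.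
Qed.

Lemma int_to_natK (z : int) : 0 <= z -> Posz (int_to_nat z) = z.
Proof. by case: z. Qed.

Local Close Scope ring_scope.

Section PhiGamma.

Variable k : nat.
Local Open Scope ring_scope.

Local Notation jpar n s := ((last 0 s)%:Z - n%:Z + k%:Z).
Local Notation ipr n s := (iprime n k (des s)%:Z (jpar n s)).
Local Notation jpr n s := (jprime n k (des s)%:Z (jpar n s)).

Lemma phi_n1_Gamma s : A_nk 1 k s -> Gamma k 1 (ipr 1 s) (jpr 1 s) (phi_n k 1 s).
Proof.
move=> /A_nkP[_ size_s range_s _].
have -> : s = [:: 1]%N.
  case: s size_s range_s => [|x [|//]] //= _ /(_ x (mem_head x [::])).
  by case: x => [|[]].
have des1 : des [:: 1%N] = 0%N by rewrite /des big_geq.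
have ip1 : iprime 1 k 0 (1 - 1 + k%:Z) = 0.
  by rewrite /iprime bigN_lastE divz_small //=; lia.
rewrite /Gamma des1 /= ip1 /jprime ip1 bigN_lastE.
apply/and3P; split; [|by []|apply/eqP; lia].
by apply/A_nkP; split=> // [x | [|m] //]; rewrite inE => /eqP->.
Qed.

Lemma phi_n_ins n s p : is_perm n.+1 s ->
  phi_n k n.+2 (ins s p) = ins (phi_n k n.+1 s) (int_to_nat (n.+2%:Z - k%:Z + jpr n.+2 (ins s p))).
Proof.
move=> perm_s; have := std_ins_take p perm_s; rewrite (perm_size perm_s) size_iota => std_s.
by rewrite -[X in phi_n k n.+1 X]std_s.
Qed.

Lemma Gamma_ins n s t p :
  A_nk n.+1 k s -> (0 < p <= n.+2)%N -> (n.+2 - p <= k)%N ->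
  Gamma k n.+1 (ipr n.+1 s) (jpr n.+1 s) t ->
  Gamma k n.+2 (ipr n.+2 (ins s p)) (jpr n.+2 (ins s p))
    (ins t (int_to_nat (n.+2%:Z - k%:Z + jpr n.+2 (ins s p)))).
Proof.
move=> A_s p_range drop_p /and3P[A_t /eqP des_t /eqP last_t].
have [size_s size_t] : size s = n.+1 /\ size t = n.+1.
  by case/A_nkP: A_s; case/A_nkP: A_t.
have [q_range drop_q] := A_nk_last A_s.
rewrite des_ins ?size_s // last_ins PoszD.
set q := last 0 s in q_range drop_q des_t last_t *.
set jp := jprime _ _ _ _; set jp0 := jprime n.+1 _ _ _ in last_t.
have r_gt0 : 0 < n.+2%:Z - k%:Z + jp by apply: jprime_last_gt0.
have /andP[jp_ge0 jp_le] : 0 <= jp <= k%:Z by rewrite jprime_ge0 jprime_le.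
have /andP[jp0_ge0 jp0_le] : 0 <= jp0 <= k%:Z by rewrite jprime_ge0 jprime_le.
have := int_to_natK (ltW r_gt0); set r := int_to_nat _ => def_r.
apply/and3P; split.
- by rewrite A_nk_ins // A_t /=; apply/andP; split; lia.
- have [le_p le_q] : (p <= n.+2)%N /\ (q <= n.+1)%N by lia.
  rewrite des_ins ?size_t // PoszD des_t iprime_ins // -/jp -/jp0.
  apply/eqP; congr (_ + Posz _); congr nat_of_bool.
  (* [Gamma] writes [last 0 t] in ring_scope, with the zero of the nat
     semiring; [set] identifies it with [0%N], so that [lia] sees one atom. *)
  by set l := last 0%N t in last_t *; apply/idP/idP; lia.
- by rewrite last_ins def_r.
Qed.

Lemma phi_n_Gamma n s : (0 < n)%N -> A_nk n k s ->
  Gamma k n (ipr n s) (jpr n s) (phi_n k n s).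
Proof.
elim: n s => [// | [|n] IH] s _ A_s; first exact: phi_n1_Gamma.
case/lastP: s A_s => [|t p] A_s; first by case/A_nkP: A_s.
have [p_notin_t size_t] : p \notin t /\ size (map (unbump p) t) = n.+1.
  by case/A_nkP: A_s; rewrite rcons_uniq size_rcons size_map => /andP[? _] [].
rewrite (rcons_ins p_notin_t) in A_s *; set s := map _ t in A_s size_t *.
move: A_s; rewrite A_nk_ins // => /and3P[A_s p_range drop_p].
rewrite phi_n_ins; last by case/andP: A_s.
by apply: Gamma_ins => //; apply: IH.
Qed.

End PhiGamma.

Theorem lemma2p2 (n k i j : nat) (s : seq nat) :
  1 <= n -> i <= n - 1 -> j <= k ->
  Gamma k n i j s ->
  Gamma k n (iprime n k i j) (jprime n k i j) (phi k s).
Proof.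
move=> n_gt0 _ _ /and3P[A_s /eqP des_s /eqP last_s].
have size_s : size s = n by case/A_nkP: A_s.
have -> : Posz j = (Posz (last 0 s) - Posz n + Posz k)%R by rewrite last_s; lia.
by rewrite /phi size_s -des_s; apply: phi_n_Gamma.
Qed.
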